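(* For every positive integer $n$ there exists an $n$-uniform hypergraph $G=(V,E)$ with $|V|=n^2$ vertices and $|E|=n^2$ edges with the following property: for every set $F\subseteq V$ with $|F|\le n^2/100$ there exists a set $H\subseteq V$ such that $|H|\le 100\,n\log n$, $H\cap F=\emptyset$, and $H$ intersects all but at most $n$ of the edges in $E$.
   Context: A hypergraph is $n$-uniform if every edge has exactly $n$ vertices. $\log$ denotes the natural logarithm. The stated property is called the ''everywhere almost-hittable'' (EAH) property. *)

From mathcomp Require Import all_boot.
From Stdlib Require Import Reals.

Definition uniform {V : finType} (n : nat) (E : {set {set V}}) : Prop :=
  forall e, e \in E -> #|e| = n.

Definition missed {V : finType} (E : {set {set V}}) (H : {set V}) : nat :=
  #|[set e in E | [disjoint e & H]]|.

From mathcomp Require Import all_boot all_algebra finfield zify.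

Set Implicit Arguments. Unset Strict Implicit. Unset Printing Implicit Defensive.

(* For n >= 8 let q = 2^k be the power of two with q <= n < 2q and K the field of order q.
   The vertices are the cells of the n x n grid; column r carries the field element of
   index r mod q, and the edge of a polynomial p of degree at most 2 over K is the graph of
   r |-> p(column r), one cell per column. Two quadratics agree on at most two points, so
   distinct edges share at most four cells; we keep n^2 of these edges.
   Given a forbidden set F with 100|F| <= n^2, the trace of an edge is the set of columns
   where it runs inside F. A Bonferroni bound shows that at most n/2 traces are large, and
   double counting pairs (R, trace) with R a set of k + 2 columns inside the trace gives
   such an R inside at most n traces. The unforbidden cells of the columns of R then form
   a hitting set of size at most (k + 2) n <= 100 n ln n.
   For n < 8 any n-uniform hypergraph with n^2 edges works: no vertex can be forbidden and
   the whole vertex set (the empty set when n = 1) is a hitting set. *)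

Lemma subset_of_card (T : finType) (B : {set T}) m :
  m <= #|B| -> exists2 A : {set T}, A \subset B & #|A| = m.
Proof.
case/card_geqP=> s [us <- sB]; exists [set x in s].
  by apply/subsetP=> x; rewrite inE => /sB.
by rewrite cardsE; apply/card_uniqP.
Qed.

(* The ratio n^_k / n^k of falling to ordinary powers increases with n. *)
Lemma ffact_ratio_mono t n k : t <= n -> t ^_ k * n ^ k <= n ^_ k * t ^ k.
Proof.
move=> le_tn; elim: k => [|k IH]; first by rewrite ffactn0 muln1.
rewrite !ffactnSr !expnS.
have step : (t - k) * n <= (n - k) * t by rewrite !mulnBl; nia.
by have := leq_mul IH step; nia.
Qed.

Lemma bin_half t n k : 0 < n -> 2 * t <= n -> 'C(t, k) * 2 ^ k <= 'C(n, k).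
Proof.
move=> n_gt0 le_2tn.
have ratio : 'C(t, k) * n ^ k <= 'C(n, k) * t ^ k.
  rewrite -(leq_pmul2r (fact_gt0 k)) mulnAC [X in _ <= X]mulnAC !bin_ffact.
  by apply: ffact_ratio_mono; lia.
have pow : (2 * t) ^ k <= n ^ k by case: k {ratio} => // k; rewrite leq_exp2r.
rewrite -(leq_pmul2r (_ : 0 < n ^ k)) ?expn_gt0 ?n_gt0 //.
rewrite expnMn in pow; nia.
Qed.

Lemma bin_ge m k : 0 < k < m -> m <= 'C(m, k).
Proof.
elim: m k => [|m IH] [|k] //= lt_km; rewrite binS.
case: (ltnP k.+1 m) => [lt_k1m | le_mk1].
  have := IH k.+1 lt_k1m; have : 0 < 'C(m, k) by rewrite bin_gt0; lia.
  lia.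
have -> : m = k.+1 by lia.
by rewrite binn binSn.
Qed.

Lemma cardI_bigcup_le (I T : finType) (A : {set T}) (B : I -> {set T}) (s : seq I) :
  #|A :&: \bigcup_(i <- s) B i| <= \sum_(i <- s) #|A :&: B i|.
Proof.
elim: s => [|i s IH]; first by rewrite !big_nil setI0 cards0.
rewrite !big_cons setIUr; have := cardsUI (A :&: B i) (A :&: \bigcup_(j <- s) B j).
lia.
Qed.

Lemma sum_card_le_cover (I T : finType) (A : I -> {set T}) c (s : seq I) :
  uniq s -> (forall i j, i != j -> #|A i :&: A j| <= c) ->
  \sum_(i <- s) #|A i| <= #|\bigcup_(i <- s) A i| + c * (size s * (size s).-1).
Proof.
move=> us smallI; elim: s us => [|i s IH] /=; first by rewrite !big_nil.
case/andP=> i_notin_s us; rewrite !big_cons.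
have overlap : \sum_(j <- s) #|A i :&: A j| <= c * size s.
  rewrite -[size s]sum1_size big_distrr /= big_seq [X in _ <= X]big_seq.
  apply: leq_sum => j js; rewrite muln1; apply: smallI.
  by apply: contraNneq i_notin_s => ->.
have := cardsUI (A i) (\bigcup_(j <- s) A j).
have := cardI_bigcup_le (A i) A s.
have := IH us; nia.
Qed.

Lemma few_large_sets (I T : finType) (A : I -> {set T}) (X : {set I}) (F : {set T}) n :
  (forall i j, i != j -> #|A i :&: A j| <= 4) -> 100 * #|F| <= n * n ->
  (forall i, i \in X -> A i \subset F /\ n < 2 * #|A i|) -> 2 * #|X| <= n.
Proof.
move=> smallI smallF large; rewrite leqNgt; apply/negP => many.
set m := n %/ 16 + 1.
have /card_geqP[s [us size_s sX]] : m <= #|X| by rewrite /m; lia.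
have cover := sum_card_le_cover us smallI; rewrite size_s in cover.
have inF : #|\bigcup_(i <- s) A i| <= #|F|.
  apply: subset_leq_card; rewrite big_seq.
  apply: (big_ind (fun S : {set T} => S \subset F)) => [|B C|i /sX /large[] //]; first exact: sub0set.
  by rewrite subUset => -> ->.
have sum_large : m * (n + 1) <= 2 * \sum_(i <- s) #|A i|.
  rewrite -size_s -sum1_size big_distrl big_distrr /= big_seq [X in _ <= X]big_seq.
  by apply: leq_sum => i /sX /large[_]; lia.
(* m (n + 1) <= 2 |F| + 8 m (m - 1) <= n^2 / 50 + m n / 2 contradicts n < 16 m. *)
have m_le : 16 * (m - 1) <= n by rewrite /m; lia.
have m_gt : n < 16 * m by rewrite /m; lia.
have pairs : 16 * (m * (m - 1)) <= m * n by nia.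
have sq : n * n <= 16 * (m * n) - n by nia.
have m_gt0 : 1 <= m by rewrite /m; lia.
rewrite (_ : m.-1 = m - 1) in cover; last by lia.
move: cover inF sum_large pairs smallF sq m_gt0; rewrite mulnDr muln1.
move: (\sum_(i <- s) _) (#|\bigcup_(i <- s) _|) (m * (m - 1)) (m * n) (n * n) #|F|.
lia.
Qed.

Lemma card_sep_sum (I : finType) (a c : pred I) :
  #|[set x | a x & c x]| = \sum_(x | a x) c x.
Proof.
rewrite -sum1dep_card big_mkcondr /=.
by apply: eq_bigr => x _; case: (c x).
Qed.

(* A family P of "traces" T p, subsets of n columns. We look for a set R of k columns
   that lies inside few traces: the hitting set will use the columns of R. *)
Section Averaging.
Variables (I : finType) (n : nat) (P : {set I}) (T : I -> {set 'I_n}).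

Definition covering (R : {set 'I_n}) : {set I} := [set p in P | R \subset T p].

Lemma double_count k :
  \sum_(R : {set 'I_n} | #|R| == k) #|covering R| = \sum_(p in P) 'C(#|T p|, k).
Proof.
rewrite (eq_bigr (fun R : {set 'I_n} => \sum_(p in P) (R \subset T p))) => [|R _]; last first.
  exact: (card_sep_sum (mem P) (fun p => R \subset T p)).
rewrite exchange_big /=; apply: eq_bigr => p _.
rewrite -cards_draws -(@card_sep_sum _ (fun R : {set 'I_n} => #|R| == k) (fun R => R \subset T p)).
by apply: eq_card => R; rewrite !inE andbC.
Qed.

(* If at most n/2 traces are large (more than n/2 columns) and there are at most n^2
   traces, then the number of k-subsets inside traces is at most n 'C(n, k) once 2n <= 2^k:
   large traces contribute at most (n/2) 'C(n, k) and each small one at most 'C(n, k) / 2^k. *)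
Lemma sum_bin_traces k :
  #|P| <= n * n -> 0 < n -> 2 * n <= 2 ^ k ->
  2 * #|[set p in P | n < 2 * #|T p|]| <= n ->
  \sum_(p in P) 'C(#|T p|, k) <= n * 'C(n, k).
Proof.
move=> cardP n_gt0 k_large few_large.
set C := 'C(n, k); set h := #|[set p in P | _]| in few_large.
rewrite (bigID (fun p => n < 2 * #|T p|)) /=.
set large := \sum_(p in P | _) _; set small := \sum_(p in P | _) _.
have large_le : large <= h * C.
  rewrite /large (eq_bigl (fun p => p \in [set q in P | n < 2 * #|T q|])); last first.
    by move=> p; rewrite inE.
  rewrite -sum_nat_const; apply: leq_sum => p _; apply: leq_bin2l.
  by rewrite -[n in _ <= n]card_ord max_card.
have small_le : 2 ^ k * small <= n * n * C.
  rewrite /small big_distrr /=.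
  apply: (@leq_trans (\sum_(p in P) C)); last by rewrite sum_nat_const leq_mul.
  rewrite [X in _ <= X](bigID (fun p => n < 2 * #|T p|)) /= (leq_trans _ (leq_addl _ _)) //.
  apply: leq_sum => p /andP[_]; rewrite -leqNgt => small_p.
  by rewrite mulnC; exact: bin_half.
(* Scaled by 2^(k+1): 2^k (2 large + 2 small) <= 2^k n C + 2 n^2 C <= 2^(k+1) n C. *)
have pow_gt0 : 0 < 2 ^ k by rewrite expn_gt0.
move: few_large large_le small_le k_large; set Q := 2 ^ k => few_large large_le small_le k_large.
have e1 : Q * (2 * h) * C <= Q * n * C by rewrite leq_mul // leq_mul.
have e2 : 2 * n * (n * C) <= Q * (n * C) by rewrite leq_mul.
have e3 : Q * large <= Q * (h * C) by rewrite leq_mul.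
rewrite -(leq_pmul2l (_ : 0 < 2 * Q)) ?muln_gt0 //.
nia.
Qed.

Lemma good_columns k :
  k <= n -> \sum_(p in P) 'C(#|T p|, k) <= n * 'C(n, k) ->
  exists R : {set 'I_n}, #|R| = k /\ #|covering R| <= n.
Proof.
move=> le_kn sum_le.
have [R /andP[/eqP cardR few] | none] :=
  pickP [pred R : {set 'I_n} | (#|R| == k) && (#|covering R| <= n)].
  by exists R.
have many : \sum_(R : {set 'I_n} | #|R| == k) n.+1 <=
            \sum_(R : {set 'I_n} | #|R| == k) #|covering R|.
  apply: leq_sum => R cardR; have := none R; rewrite /= cardR /= => /negbT.
  by rewrite ltnNge.
rewrite double_count sum_nat_cond_const card_draws card_ord in many.
have : 0 < 'C(n, k) by rewrite bin_gt0.
move: many sum_le; move: ('C(n, k)) (\sum_(p in P) _) => C S; nia.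
Qed.

End Averaging.

Definition almost_hittable (V : finType) (n b : nat) (E : {set {set V}}) : Prop :=
  forall F : {set V}, 100 * #|F| <= n * n ->
    exists H : {set V}, [/\ #|H| <= b, [disjoint H & F] & missed E H <= n].

Import GRing.Theory.

Lemma card_roots_lt_size (K : finIdomainType) (D : {poly K}) :
  D != 0%R -> #|[set z | root D z]| < size D.
Proof.
move=> D_neq0; rewrite cardE; apply: max_poly_roots => //; last exact: enum_uniq.
by apply/allP=> z; rewrite mem_enum inE.
Qed.

Section Construction.
Variables (K : finFieldType) (n : nat).
Hypotheses (le_Kn : #|K| <= n) (lt_n2K : n < 2 * #|K|).

Let card_K_gt0 : 0 < #|K|. Proof. lia. Qed.

Definition col_point (r : 'I_n) : K := enum_val (Ordinal (ltn_pmod r card_K_gt0)).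
Definition row_of (y : K) : 'I_n := widen_ord le_Kn (enum_rank y).
Definition graph_fun (p : {poly_3 K}) (r : 'I_n) : 'I_n := row_of p.[col_point r]%R.
Definition edge (p : {poly_3 K}) : {set 'I_n * 'I_n} := [set (r, graph_fun p r) | r : 'I_n].

Lemma row_of_inj : injective row_of.
Proof. by move=> y y' /(congr1 val) /= /val_inj /enum_rank_inj. Qed.

Lemma graph_inj p : injective (fun r => (r, graph_fun p r)).
Proof. by move=> r r' []. Qed.

Lemma col_point_tag_inj : injective (fun r => (col_point r, #|K| <= r)).
Proof.
have split_col (r : 'I_n) : (r : nat) = (#|K| <= r) * #|K| + r %% #|K|.
  case: leqP => [le_Kr | lt_rK] /=; last by rewrite modn_small.
  have lt_r2K : (r : nat) < 2 * #|K| by have := ltn_ord r; lia.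
  rewrite -[in RHS](subnKC le_Kr) modnDl modn_small; last by lia.
  by rewrite /nat_of_bool mul1n subnKC.
move=> r r' [/enum_val_inj /(congr1 val) /= same_mod same_tag].
by apply: val_inj; rewrite /= split_col [RHS]split_col same_mod same_tag.
Qed.

Lemma card_col_preimage (Z : {set K}) : #|[set r | col_point r \in Z]| <= 2 * #|Z|.
Proof.
rewrite -(card_imset _ col_point_tag_inj) mulnC -[2]card_bool.
rewrite -(cardsT bool) -cardsX; apply/subset_leq_card/subsetP=> x /imsetP[r].
by rewrite !inE => Zr ->; rewrite /= Zr.
Qed.

(* Two distinct quadratic polynomials agree on at most two field points,
   hence their graphs agree on at most four columns. *)
Lemma card_agree p p' : p != p' -> #|[set r | graph_fun p r == graph_fun p' r]| <= 4.
Proof.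
move=> neq_pp'; set D : {poly K} := (val p - val p')%R.
have D_neq0 : D != 0%R by rewrite subr_eq0; apply: contra neq_pp' => /eqP/val_inj ->.
have size_D : size D <= 3.
  by rewrite (leq_trans (size_polyD _ _)) // size_polyN geq_max !size_npoly.
have -> : [set r | graph_fun p r == graph_fun p' r] = [set r | col_point r \in [set z | root D z]].
  apply/setP=> r; rewrite !inE /graph_fun (inj_eq row_of_inj).
  by rewrite /root hornerD hornerN subr_eq0.
have := card_roots_lt_size D_neq0; have := card_col_preimage [set z | root D z].
move: #|_| #|_| (size D) size_D => c c' s; lia.
Qed.

Lemma card_edge p : #|edge p| = n.
Proof. by rewrite card_imset ?card_ord //; apply: graph_inj. Qed.

Lemma card_edgeI p p' : p != p' -> #|edge p :&: edge p'| <= 4.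
Proof.
move=> neq_pp'; apply: leq_trans (card_agree neq_pp').
rewrite -(card_imset _ (@graph_inj p)).
apply/subset_leq_card/subsetP=> x; rewrite inE => /andP[/imsetP[r _ ->] /imsetP[r' _ e]].
move: (congr1 fst e) (congr1 snd e) => /= <- same.
by apply: imset_f; rewrite inE same.
Qed.

Lemma edge_inj : 4 < n -> injective edge.
Proof.
move=> n_gt4 p p' same; apply/eqP; apply: contraT => neq_pp'.
by have := card_edgeI neq_pp'; rewrite same setIid card_edge; lia.
Qed.

Definition trace (F : {set 'I_n * 'I_n}) (p : {poly_3 K}) : {set 'I_n} :=
  [set r | (r, graph_fun p r) \in F].

Lemma card_edgeI_trace F p : #|edge p :&: F| = #|trace F p|.
Proof.
rewrite -(card_imset _ (@graph_inj p)); apply: eq_card => x; rewrite !inE.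
apply/andP/imsetP => [[/imsetP[r _ ->] Fx] | [r Fr ->]]; first by exists r; rewrite ?inE.
by rewrite inE in Fr; split => //; apply: imset_f.
Qed.

(* Since edges almost pairwise avoid each other, few of them can run inside F
   on more than half of the columns. *)
Lemma few_large_traces (P : {set {poly_3 K}}) (F : {set 'I_n * 'I_n}) :
  100 * #|F| <= n * n -> 2 * #|[set p in P | n < 2 * #|trace F p|]| <= n.
Proof.
move=> smallF; apply: (@few_large_sets _ _ (fun p => edge p :&: F) _ F) => //.
  move=> p p' neq_pp'; apply: leq_trans (card_edgeI neq_pp').
  by apply/subset_leq_card/setISS; apply: subsetIl.
by move=> p; rewrite inE card_edgeI_trace => /andP[_ large]; rewrite subsetIr.
Qed.

Definition column_set (R : {set 'I_n}) (F : {set 'I_n * 'I_n}) : {set 'I_n * 'I_n} :=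
  [set x | x.1 \in R] :\: F.

Lemma card_column_set R F : #|column_set R F| <= #|R| * n.
Proof.
rewrite -[n in _ * n]card_ord -cardsT -cardsX; apply/subset_leq_card/subsetP=> x.
by rewrite !inE => /andP[_ ->].
Qed.

Lemma column_set_disjoint R F : [disjoint column_set R F & F].
Proof. by rewrite disjoints_subset; apply/subsetP=> x; rewrite !inE => /andP[]. Qed.

Lemma edge_misses_column_set p R F :
  [disjoint edge p & column_set R F] = (R \subset trace F p).
Proof.
rewrite disjoints_subset; apply/subsetP/subsetP => [sub r Rr | sub _ /imsetP[r _ ->]].
  have on_edge : (r, graph_fun p r) \in edge p by apply/imsetP; exists r.
  have := sub _ on_edge.
  by rewrite !inE Rr /= andbT negbK.
rewrite !inE /= negb_and negbK orbC.
by case: (boolP (r \in R)) => //= /sub; rewrite inE.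
Qed.

Lemma missed_column_set (P : {set {poly_3 K}}) (R : {set 'I_n}) (F : {set 'I_n * 'I_n}) :
  4 < n ->
  missed [set edge p | p in P] (column_set R F) = #|covering P (trace F) R|.
Proof.
move=> n_gt4; rewrite /missed -(card_imset _ (edge_inj n_gt4)).
apply: eq_card => e; rewrite !inE; apply/andP/imsetP => [[/imsetP[p Pp ->] miss] | [p]].
  by exists p; rewrite // inE Pp -edge_misses_column_set.
by rewrite inE => /andP[Pp sub] ->; rewrite edge_misses_column_set imset_f.
Qed.

(* The hypergraph of n^2 quadratic polynomials is almost-hittable with budget k n
   whenever 2n <= 2^k: choose k columns well and take their unforbidden cells. *)
Lemma grid_almost_hittable (P : {set {poly_3 K}}) k :
  #|P| = n * n -> 4 < n -> 2 * n <= 2 ^ k -> k <= n ->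
  almost_hittable n (k * n) [set edge p | p in P].
Proof.
move=> cardP n_gt4 k_large le_kn F smallF.
have n_gt0 : 0 < n by lia.
have sum_le := sum_bin_traces (eq_leq cardP) n_gt0 k_large (few_large_traces P smallF).
have [R [cardR few]] := good_columns le_kn sum_le.
exists (column_set R F); split; last by rewrite missed_column_set.
  by rewrite -cardR card_column_set.
exact: column_set_disjoint.
Qed.

End Construction.

(* Guarantees that the k + 2 columns chosen for n >= 2^k fit in the grid. *)
Lemma add2_le_pow2 k : 2 <= k -> k + 2 <= 2 ^ k.
Proof.
elim: k => // k IH; rewrite ltnS leq_eqVlt => /predU1P[<- // | k_ge2].
by rewrite expnS; have := IH k_ge2; lia.
Qed.

(* Choose n^2 quadratic polynomials over the field of order 2^k, where 2^k <= n < 2^(k+1):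
   this settles all n >= 8 with budget (k + 2) n. *)
Lemma large_almost_hittable n : 8 <= n ->
  exists k, exists E : {set {set 'I_n * 'I_n}},
    [/\ 3 <= k, 2 ^ k <= n, uniform n E, #|E| = n * n & almost_hittable n ((k + 2) * n) E].
Proof.
move=> n_ge8; set k := trunc_log 2 n.
have pow_le : 2 ^ k <= n by apply: trunc_logP; lia.
have pow_gt : n < 2 ^ k.+1 by apply: trunc_log_ltn.
have k_ge3 : 3 <= k.
  by rewrite -ltnS -(@ltn_exp2l 2) //; apply: leq_ltn_trans n_ge8 pow_gt.
have [K _ card_K] := pPrimePowerField (isT : prime 2) (ltnW (ltnW k_ge3)).
have le_Kn : #|K| <= n by rewrite card_K.
have lt_n2K : n < 2 * #|K| by rewrite card_K -expnS.
have many_polys : n * n <= #|[set: {poly_3 K}]|.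
  by rewrite cardsT card_npoly; move: lt_n2K n_ge8; move: #|K| => q; nia.
have [P _ cardP] := subset_of_card many_polys.
have n_gt4 : 4 < n by lia.
have k2_le : k + 2 <= n by rewrite (leq_trans (add2_le_pow2 _)) //; lia.
exists k, [set edge le_Kn lt_n2K p | p in P]; split => //.
- by move=> e /imsetP[p _ ->]; exact: card_edge.
- by rewrite card_imset //; exact: edge_inj.
- by apply: grid_almost_hittable => //; move: pow_gt; rewrite expnD expnS (_ : 2 ^ 2 = 4) //; lia.
Qed.

(* On n^2 vertices there are at least n^2 sets of size n, hence an n-uniform
   hypergraph with n^2 edges. *)
Lemma exists_uniform (V : finType) n : 0 < n -> #|V| = n * n ->
  exists E : {set {set V}}, uniform n E /\ #|E| = n * n.
Proof.
move=> n_gt0 card_V.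
have enough : n * n <= #|[set e : {set V} | #|e| == n]|.
  rewrite card_draws card_V; case: (ltnP 1 n) => [n_gt1 | n_le1].
    by apply: bin_ge; nia.
  by have -> : n = 1 by lia.
have [E sub card_E] := subset_of_card enough.
by exists E; split => // e /(subsetP sub); rewrite inE => /eqP.
Qed.

Lemma few_edges_almost_hittable (V : finType) n (E : {set {set V}}) :
  #|E| <= n -> almost_hittable n 0 E.
Proof.
move=> few F _; exists set0; split; rewrite ?cards0 //.
  by rewrite disjoints_subset sub0set.
apply: leq_trans few; apply/subset_leq_card/subsetP=> e.
by rewrite inE => /andP[].
Qed.

(* For n < 10 no vertex may be forbidden, and the whole vertex set meets every
   (nonempty) edge. *)
Lemma small_almost_hittable (V : finType) n (E : {set {set V}}) :
  0 < n < 10 -> uniform n E -> almost_hittable n #|V| E.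
Proof.
move=> /andP[n_gt0 n_lt10] unifE F smallF.
have F0 : F = set0 by apply/cards0_eq; move: smallF; move: #|F| => f; nia.
exists [set: V]; split; rewrite ?cardsT ?F0 ?disjoints_subset ?setC0 //.
rewrite /missed; suff -> : [set e in E | [disjoint e & [set: V]]] = set0 by rewrite cards0.
apply/setP=> e; rewrite !inE; apply/negbTE/andP => -[Ee].
rewrite disjoints_subset setCT subset0 => /eqP e0.
by have := unifE e Ee; rewrite e0 cards0; lia.
Qed.

Section Image.
Variables (V W : finType) (g : V -> W).
Hypothesis g_inj : injective g.

Definition image_hypergraph (E : {set {set V}}) : {set {set W}} :=
  [set g @: e | e : {set V} in E].

Lemma uniform_image n (E : {set {set V}}) : uniform n E -> uniform n (image_hypergraph E).
Proof. by move=> unifE e' /imsetP[e Ee ->]; rewrite card_imset ?unifE. Qed.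

Lemma card_image_hypergraph (E : {set {set V}}) : #|image_hypergraph E| = #|E|.
Proof. by rewrite card_imset //; apply: imset_inj. Qed.

(* An injection preserves disjointness, hence the number of missed edges. *)
Lemma missed_image (E : {set {set V}}) (H : {set V}) :
  missed (image_hypergraph E) (g @: H) = missed E H.
Proof.
rewrite /missed -(card_imset _ (imset_inj g_inj)); apply: eq_card => e; rewrite !inE.
apply/andP/imsetP => [[/imsetP[e0 Ee0 ->]] | [e0]].
  by rewrite imset_disjoint // => miss; exists e0; rewrite // inE Ee0.
by rewrite inE => /andP[Ee0 miss] ->; rewrite imset_f ?imset_disjoint.
Qed.

(* Pull the forbidden set back along g and push the hitting set forward. *)
Lemma almost_hittable_image n b (E : {set {set V}}) :
  almost_hittable n b E -> almost_hittable n b (image_hypergraph E).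
Proof.
move=> hitE F smallF.
have small_pre : 100 * #|g @^-1: F| <= n * n.
  apply: leq_trans smallF; rewrite leq_mul2l /= -(card_imset _ g_inj).
  by apply/subset_leq_card/subsetP=> y /imsetP[x]; rewrite inE => Fx ->.
have [H [card_H avoid miss]] := hitE _ small_pre.
exists (g @: H); split; rewrite ?card_imset ?missed_image //.
rewrite disjoints_subset; apply/subsetP=> y /imsetP[x Hx ->]; rewrite inE.
by move/disjointFr: avoid => /(_ x Hx); rewrite inE => ->.
Qed.

End Image.

(* The remaining estimates are about the natural logarithm; the real numbers are
   imported only now because their notations shadow those of the natural numbers. *)
From Stdlib Require Import Reals Lra.

(* (k + 2) n <= 100 n ln n when 8 <= 2^k <= n, since k ln 2 <= ln n and ln 2 > 1/2. *)
Lemma budget_large n k : (3 <= k)%N -> (expn 2 k <= n)%N ->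
  (INR ((k + 2) * n) <= 100 * INR n * ln (INR n))%R.
Proof.
move=> k_ge3 /leP/le_INR pow_le.
have pow_eq : INR (expn 2 k) = (2 ^ k)%R.
  by elim: k {k_ge3 pow_le} => [|k IH] //; rewrite expnS mult_INR IH.
rewrite pow_eq in pow_le.
have log_le : (INR k * ln 2 <= ln (INR n))%R.
  rewrite -ln_pow; last lra.
  have [lt | ->] := Rle_lt_or_eq_dec _ _ pow_le; last lra.
  by apply/Rlt_le/ln_increasing => //; apply: pow_lt; lra.
have k_ge : (3 <= INR k)%R.
  rewrite (_ : 3%R = INR 3); last by rewrite INR_IZR_INZ.
  by apply: le_INR; apply/leP.
have half_le : (INR k / 2 <= INR k * ln 2)%R by have := ln_lt_2; nra.
have k2_le : (INR k + 2 <= 100 * ln (INR n))%R by lra.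
rewrite mult_INR plus_INR (_ : INR 2 = 2%R); last by rewrite INR_IZR_INZ.
by have := pos_INR n; nra.
Qed.

(* n^2 <= 100 n ln n for 2 <= n < 8, since n < 8 < 100 ln 2. *)
Lemma budget_small n : (2 <= n)%N -> (n < 8)%N ->
  (INR (n * n) <= 100 * INR n * ln (INR n))%R.
Proof.
move=> /leP/(le_INR 2) n_ge2 /ltP/(lt_INR _ 8) n_lt8.
rewrite [INR 2]INR_IZR_INZ /= in n_ge2; rewrite [INR 8]INR_IZR_INZ /= in n_lt8.
have log_ge : (ln 2 <= ln (INR n))%R.
  have [lt | <-] := Rle_lt_or_eq_dec _ _ n_ge2; last lra.
  by apply/Rlt_le/ln_increasing; lra.
have ln2 := ln_lt_2.
rewrite mult_INR; nra.
Qed.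

Lemma grid_hypergraph n : (0 < n)%N ->
  exists b, exists E : {set {set 'I_n * 'I_n}},
    [/\ (INR b <= 100 * INR n * ln (INR n))%R, uniform n E, #|E| = (n * n)%N
      & almost_hittable n b E].
Proof.
move=> n_gt0; have [n_ge8 | n_lt8] := leqP 8 n.
  have [k [E [k_ge3 pow_le unifE cardE hitE]]] := large_almost_hittable n_ge8.
  by exists ((k + 2) * n)%N, E; split => //; apply: budget_large.
have card_grid : #|{: 'I_n * 'I_n}| = (n * n)%N by rewrite card_prod card_ord.
have [E [unifE cardE]] := exists_uniform n_gt0 card_grid.
have [n_gt1 | n_le1] := ltnP 1 n.
  exists (n * n)%N, E; split => //; first exact: budget_small.
  by rewrite -card_grid; apply: small_almost_hittable; rewrite ?n_gt0 //; lia.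
have n1 : n = 1%N by lia.
exists 0%N, E; split => //; first by rewrite n1 /= ln_1; lra.
by apply: few_edges_almost_hittable; rewrite cardE n1.
Qed.

Theorem lemma3p1 :
  forall n : nat, (0 < n)%N ->
  exists E : {set {set 'I_(n ^ 2)}},
    uniform n E /\ #|E| = (n ^ 2)%N /\
    forall F : {set 'I_(n ^ 2)}, (100 * #|F| <= n ^ 2)%N ->
      exists H : {set 'I_(n ^ 2)},
        (INR #|H| <= 100 * INR n * ln (INR n))%R /\
        [disjoint H & F] /\
        (missed E H <= n)%N.
Proof.
move=> n n_gt0.
have [b [E [budget unifE cardE hitE]]] := grid_hypergraph n_gt0.
have sq : (n ^ 2 = n * n)%N by rewrite /= Nat.mul_1_r.
have card_grid : #|{: 'I_n * 'I_n}| = (n ^ 2)%N by rewrite card_prod card_ord sq.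
pose g (x : 'I_n * 'I_n) : 'I_(n ^ 2) := cast_ord card_grid (enum_rank x).
have g_inj : injective g by move=> x y /cast_ord_inj /enum_rank_inj.
exists (image_hypergraph g E); split; first exact: uniform_image.
split; first by rewrite card_image_hypergraph // cardE sq.
move=> F smallF; have smallF' : (100 * #|F| <= n * n)%N by rewrite -sq.
have [H [card_H avoid miss]] := almost_hittable_image g_inj hitE smallF'.
exists H; split => //; apply: Rle_trans budget.
by apply: le_INR; apply/leP.
Qed.
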